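(* Let $p$ be an odd prime, $m\ge 2$ an integer, $q=p^m$. Consider the map $\tau$ sending a pair of integers $(q_1,q_2)$ with $q_1,q_2,q_1+q_2,q_1-q_2$ all $\not\equiv 0\pmod q$ to the $m$-tuple of polynomials \[\tau(q_1,q_2)=\big(\psi(q_1,q_2),\ \alpha^{(1)}(q_1,q_2),\dots,\alpha^{(m-1)}(q_1,q_2)\big).\] Then $\tau$ takes at most $m^2$ distinct values.
   Context: Let $\gamma=e^{2\pi i/q}$. Let $A$ be the set of residues mod $q$ (in $\{1,\dots,q-1\}$) coprime to $q$, and for $1\le j\le m-1$ let $B_j=\{x\in\{1,\dots,q-1\}: p^j\mid x,\ p^{j+1}\nmid x\}$. For a pair $(q_1,q_2)$ define $\psi(q_1,q_2)(z)=\sum_{l\in A}\prod_{i=1}^{2}(z-\gamma^{q_il})(z-\gamma^{-q_il})$ and $\alpha^{(j)}(q_1,q_2)(z)=\sum_{l\in B_j}\prod_{i=1}^{2}(z-\gamma^{q_il})(z-\gamma^{-q_il})$, polynomials in $\mathbf{Q}(\gamma)[z]$. *)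

From HB Require Import structures.
From mathcomp Require Import all_boot all_order all_algebra all_field.
Set Implicit Arguments. Unset Strict Implicit. Unset Printing Implicit Defensive.
Import Order.TTheory GRing.Theory Num.Theory.
Local Open Scope ring_scope.

(* gamma is characterised inside algC as e^{2 pi i/q}: a primitive q-th root of
   unity with positive imaginary part and maximal real part among the q-th roots
   of unity different from 1. *)
Definition is_exp_2pii_over (q : nat) (g : algC) : Prop :=
  [/\ q.-primitive_root g, 0 < 'Im g &
      forall z : algC, q.-unity_root z -> z != 1 -> 'Re z <= 'Re g].

Definition factor_poly (g : algC) (q1 q2 : int) (l : nat) : {poly algC} :=
  ('X - (g ^ (q1 * l%:Z))%:P) * ('X - (g ^ (- (q1 * l%:Z)))%:P) *
  (('X - (g ^ (q2 * l%:Z))%:P) * ('X - (g ^ (- (q2 * l%:Z)))%:P)).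

Definition psi_poly (q : nat) (g : algC) (q1 q2 : int) : {poly algC} :=
  \sum_(1 <= l < q | coprime l q) factor_poly g q1 q2 l.

Definition alpha_poly (p q j : nat) (g : algC) (q1 q2 : int) : {poly algC} :=
  \sum_(1 <= l < q | (p ^ j %| l)%N && ~~ (p ^ j.+1 %| l)%N) factor_poly g q1 q2 l.

Definition tau (p m : nat) (g : algC) (q1 q2 : int) : seq {poly algC} :=
  psi_poly (p ^ m) g q1 q2 ::
  [seq alpha_poly p (p ^ m) j g q1 q2 | j <- iota 1 m.-1].

From HB Require Import structures.
From mathcomp Require Import all_boot all_order all_algebra all_field.
From mathcomp Require Import cyclic ring.
From Stdlib Require Import Classical.
Import Order.TTheory GRing.Theory Num.Theory.
Local Open Scope ring_scope.

(* Write c(z) = g^z + g^-z.  Expanding the product of the two reciprocal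
   quadratic factors shows that a sum over any index set S of the factor
   polynomials of (q1, q2) is determined by the two numbers
     C(q1) + C(q2)   and   C(q1 + q2) + C(q1 - q2),   C(n) = sum_(l in S) c(n l).
   When S is stable under multiplication by units mod q = p^m (the sets A and
   B_j are), C(n) depends only on the p-adic valuation v(n): if v(n) = v(n')
   then |n'| = u |n| mod q for a unit u, and l |-> u l permutes S.  Hence every
   component of tau(q1, q2) is determined by the two unordered pairs
   {v(q1), v(q2)} and {v(q1+q2), v(q1-q2)}.  By the ultrametric inequality
   (and p odd) these pairs are determined by a key in [0, m)^2, so tau is
   constant on the fibres of the key and takes at most m^2 values. *)

(* The "cosine" c(z) = g^z + g^-z, i.e. 2 cos(2 pi z / q) for g = e^(2 pi i / q). *)
Definition cosg (g : algC) (z : int) : algC := g ^ z + g ^ (- z).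

Lemma cosgN g z : cosg g (- z) = cosg g z.
Proof. by rewrite /cosg opprK addrC. Qed.

Lemma cosgM g a b : g != 0 ->
  cosg g a * cosg g b = cosg g (a + b) + cosg g (a - b).
Proof.
move=> g0; rewrite /cosg mulrDl !mulrDr -!expfzDr // opprD opprB.
by rewrite [- a + b]addrC; ring.
Qed.

Lemma reciprocal_quadratic (R : comNzRingType) (a a' : R) : a * a' = 1 ->
  ('X - a%:P) * ('X - a'%:P) = 'X^2 + 1 - (a + a')%:P * 'X.
Proof. by move=> aa'; rewrite polyCD -polyC1 -aa' polyCM; ring. Qed.

Lemma reciprocal_quartic (R : comNzRingType) (a a' b b' : R) :
  a * a' = 1 -> b * b' = 1 ->
  ('X - a%:P) * ('X - a'%:P) * (('X - b%:P) * ('X - b'%:P)) =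
  ('X^2 + 1) ^+ 2 - (a + a' + (b + b'))%:P * ('X * ('X^2 + 1))
  + ((a + a') * (b + b'))%:P * 'X^2.
Proof.
move=> aa' bb'; rewrite !reciprocal_quadratic // polyCM !polyCD; ring.
Qed.

Lemma factor_polyE g q1 q2 l : g != 0 ->
  factor_poly g q1 q2 l =
  ('X^2 + 1) ^+ 2 - (cosg g (q1 * l%:Z) + cosg g (q2 * l%:Z))%:P * ('X * ('X^2 + 1))
  + (cosg g ((q1 + q2) * l%:Z) + cosg g ((q1 - q2) * l%:Z))%:P * 'X^2.
Proof.
move=> g0; have recip z : g ^ z * g ^ (- z) = 1 by rewrite -expfzDr // subrr.
by rewrite /factor_poly reciprocal_quartic // cosgM // mulrDl mulrBl.
Qed.

Definition cos_sum (g : algC) (q : nat) (S : pred nat) (n : int) : algC :=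
  \sum_(1 <= l < q | S l) cosg g (n * l%:Z).

Lemma factor_sum_eq g q (S : pred nat) q1 q2 q1' q2' : g != 0 ->
  cos_sum g q S q1 + cos_sum g q S q2 = cos_sum g q S q1' + cos_sum g q S q2' ->
  cos_sum g q S (q1 + q2) + cos_sum g q S (q1 - q2) =
    cos_sum g q S (q1' + q2') + cos_sum g q S (q1' - q2') ->
  \sum_(1 <= l < q | S l) factor_poly g q1 q2 l =
    \sum_(1 <= l < q | S l) factor_poly g q1' q2' l.
Proof.
move=> g0 e1 e2.
have expand x y : \sum_(1 <= l < q | S l) factor_poly g x y l =
    \sum_(1 <= l < q | S l) ('X^2 + 1) ^+ 2
    - (cos_sum g q S x + cos_sum g q S y)%:P * ('X * ('X^2 + 1))
    + (cos_sum g q S (x + y) + cos_sum g q S (x - y))%:P * 'X^2.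
  rewrite (eq_bigr _ (fun l _ => factor_polyE g x y l g0)) big_split sumrB /=.
  by rewrite -!mulr_suml -!rmorph_sum -!big_split.
by rewrite !expand e1 e2.
Qed.

Lemma cosg_absz g (n : int) (l : nat) : cosg g (n * l%:Z) = cosg g (`|n| * l)%N.
Proof. by case: n => a; rewrite ?NegzE ?mulNr ?cosgN PoszM. Qed.

Lemma cos_sum_absz g q S n : cos_sum g q S n = cos_sum g q S `|n|%N.
Proof. by apply: eq_bigr => l _; rewrite !cosg_absz. Qed.

Lemma cosg_modn g q k : q.-primitive_root g -> cosg g (k %% q)%N = cosg g k.
Proof. by move=> g_prim; rewrite /cosg -!invr_expz -!exprnP (prim_expr_mod g_prim). Qed.

Lemma mulmod_inj q u i j : coprime u q -> (i < q)%N -> (j < q)%N ->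
  (u * i = u * j %[mod q])%N -> i = j.
Proof.
move=> cuq iq jq; wlog ji : i j iq jq / (j <= i)%N.
  by move=> W e; case: (leqP j i) => [|/ltnW] le; [|apply/esym]; apply: W.
move/eqP; rewrite eqn_mod_dvd ?leq_mul2l ?ji ?orbT // -mulnBr Gauss_dvdr.
  by rewrite -eqn_mod_dvd // !modn_small // => /eqP.
by rewrite coprime_sym.
Qed.

(* C_S is invariant under multiplication of its argument by a unit u mod q,
   provided S is: reindex the sum by the permutation l |-> u l mod q. *)
Lemma cos_sum_unit_multiple g q (S : pred nat) u a b :
  q.-primitive_root g -> coprime u q -> ~~ S 0%N ->
  (forall l, S (u * l %% q)%N = S l) -> (b = u * a %[mod q])%N ->
  cos_sum g q S b = cos_sum g q S a.
Proof.
move=> g_prim cuq S0 S_inv ba; have q_gt0 := prim_order_gt0 g_prim.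
have ordE (c : nat) : cos_sum g q S c = \sum_(i < q | S i) cosg g (c * i)%N.
  rewrite /cos_sum -(big_mkord S (fun i => cosg g (c * i)%N)) (big_ltn_cond q_gt0).
  by rewrite (negbTE S0); apply: eq_bigr => l _; rewrite PoszM.
pose h (i : 'I_q) : 'I_q := Ordinal (ltn_pmod (u * i) q_gt0).
have h_inj : injective h.
  move=> i j /(congr1 val) /= e; apply: val_inj.
  exact: mulmod_inj cuq (ltn_ord i) (ltn_ord j) e.
rewrite !ordE [RHS](reindex_inj h_inj) /=; apply: eq_big => i; first by rewrite S_inv.
move=> _; rewrite -(cosg_modn _ _ (b * i) g_prim) -(cosg_modn _ _ (a * _) g_prim).
by rewrite modnMmr -modnMml ba modnMml mulnCA mulnA.
Qed.

(* The p-adic valuation of an integer (with vz p 0 = 0). *)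
Definition vz (p : nat) (n : int) : nat := logn p `|n|.

Lemma dvdz_exp_vz p k n : prime p -> n != 0 ->
  ((p ^ k)%N%:Z %| n)%Z = (k <= vz p n)%N.
Proof. by move=> p_pr n0; rewrite dvdzE pfactor_dvdn // absz_gt0. Qed.

Lemma dvdz_exp_of_le p k n : prime p -> (k <= vz p n)%N -> ((p ^ k)%N%:Z %| n)%Z.
Proof. by move=> p_pr; have [->|n0] := eqVneq n 0; rewrite ?dvdz0 ?dvdz_exp_vz. Qed.

Lemma ndvdz_exp p m n : prime p ->
  ~~ ((p ^ m)%N%:Z %| n)%Z = (n != 0) && (vz p n < m)%N.
Proof. by move=> p_pr; have [->|n0] := eqVneq n 0; rewrite ?dvdz0 ?dvdz_exp_vz -?ltnNge. Qed.

Lemma vzN p n : vz p (- n) = vz p n.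
Proof. by rewrite /vz abszN. Qed.

Lemma vz_add_lt p x y : prime p -> x != 0 -> x + y != 0 ->
  (vz p x < vz p y)%N -> vz p (x + y) = vz p x.
Proof.
move=> p_pr x0 xy0 lt_xy; set a := vz p x.
have dvd_k k : (k <= a)%N -> ((p ^ k)%N%:Z %| x + y)%Z.
  move=> ka; apply: rpredD; apply: dvdz_exp_of_le => //.
  exact: leq_trans (ltnW lt_xy).
apply/eqP; rewrite eqn_leq -(dvdz_exp_vz _ _ _ p_pr xy0) dvd_k // andbT leqNgt.
apply/negP; rewrite -(dvdz_exp_vz _ _ _ p_pr xy0) => dvd_xy.
have : ((p ^ a.+1)%N%:Z %| (x + y) - y)%Z.
  by apply: rpredB => //; exact: dvdz_exp_of_le.
by rewrite addrK (dvdz_exp_vz _ _ _ p_pr x0) ltnn.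
Qed.

(* If v(x) = v(y) and p is odd, one of x + y, x - y still has valuation
   v(x): otherwise p^(v(x)+1) would divide (x + y) + (x - y) = 2 x. *)
Lemma vz_add_eq p x y : prime p -> odd p -> x != 0 -> x + y != 0 -> x - y != 0 ->
  vz p x = vz p y -> minn (vz p (x + y)) (vz p (x - y)) = vz p x.
Proof.
move=> p_pr p_odd x0 s0 d0 e; set a := vz p x.
have [dx dy] : ((p ^ a)%N%:Z %| x)%Z /\ ((p ^ a)%N%:Z %| y)%Z.
  by split; apply: dvdz_exp_of_le; rewrite // /a ?e.
have le_s : (a <= vz p (x + y))%N by rewrite -(dvdz_exp_vz _ _ _ p_pr s0) rpredD.
have le_d : (a <= vz p (x - y))%N by rewrite -(dvdz_exp_vz _ _ _ p_pr d0) rpredB.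
apply/eqP; rewrite eqn_leq leq_min le_s le_d andbT geq_min.
case: leqP => //= /(dvdz_exp_of_le _ _ _ p_pr) ds.
case: leqP => //= /(dvdz_exp_of_le _ _ _ p_pr) dd.
have : ((p ^ a.+1)%N%:Z %| x * 2)%Z.
  have -> : x * 2 = (x + y) + (x - y) by ring.
  exact: rpredD.
rewrite Gauss_dvdzl ?(dvdz_exp_vz _ _ _ p_pr x0) ?ltnn //.
by rewrite coprimezE /= coprimeXl // coprimen2.
Qed.

(* Positive integers with the same p-adic valuation differ by a unit factor
   modulo p^m: write a = a1 p^v, b = b1 p^v and take u = b1 a1^(phi(p^m) - 1). *)
Lemma unit_multiple p m a b : prime p -> (0 < a)%N -> (0 < b)%N ->
  logn p a = logn p b -> exists2 u, coprime u p & (b = u * a %[mod p ^ m])%N.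
Proof.
move=> p_pr a0 b0 e.
have [a1 cp_a1 Ea] := pfactor_coprime p_pr a0.
have [b1 cp_b1 Eb] := pfactor_coprime p_pr b0.
set t := totient (p ^ m); have t_gt0 : (0 < t)%N by rewrite totient_gt0 expn_gt0 prime_gt0.
have euler : (a1 ^ t = 1 %[mod p ^ m])%N.
  by apply: Euler_exp_totient; rewrite coprimeXr // coprime_sym.
exists (b1 * a1 ^ t.-1)%N; first by rewrite coprimeMl coprimeXl -!(coprime_sym p) ?cp_a1 ?cp_b1.
have -> : (b1 * a1 ^ t.-1 * a = b1 * p ^ logn p b * a1 ^ t)%N.
  by rewrite {1}Ea e -{2}(prednK t_gt0) expnS; ring.
by rewrite -modnMmr euler modnMmr muln1 -Eb.
Qed.

Lemma cos_sum_vz g p m (S : pred nat) n n' :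
  prime p -> (p ^ m).-primitive_root g -> ~~ S 0%N ->
  (forall u l, coprime u p -> S (u * l %% p ^ m)%N = S l) ->
  n != 0 -> n' != 0 -> vz p n = vz p n' ->
  cos_sum g (p ^ m) S n = cos_sum g (p ^ m) S n'.
Proof.
move=> p_pr g_prim S0 S_inv n0 n'0 e.
have [n_gt0 n'_gt0] : (0 < `|n|)%N /\ (0 < `|n'|)%N by rewrite !absz_gt0.
have [u cup Eu] := unit_multiple _ m _ _ p_pr n_gt0 n'_gt0 e.
rewrite cos_sum_absz [RHS]cos_sum_absz; symmetry.
by apply: (cos_sum_unit_multiple _ _ _ u) => //; [rewrite coprimeXr | move=> l; apply: S_inv].
Qed.

Lemma coprime_unit_mul q u l : coprime u q -> coprime (u * l %% q) q = coprime l q.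
Proof. by move=> cuq; rewrite coprime_modl coprimeMl cuq. Qed.

Lemma dvdn_pexp_unit_mul p m k u l : (k <= m)%N -> coprime u p ->
  (p ^ k %| u * l %% p ^ m)%N = (p ^ k %| l)%N.
Proof.
move=> km cup; rewrite {1}/dvdn (modn_dvdm _ (dvdn_exp2l p km)).
by rewrite -/(p ^ k %| u * l)%N Gauss_dvdr // coprimeXl // coprime_sym.
Qed.

Lemma sum_pair_eq (R : nmodType) (T : Type) (P : T -> Prop) (f : T -> R)
    (h : T -> nat) x1 x2 y1 y2 :
  (forall x y, P x -> P y -> h x = h y -> f x = f y) ->
  P x1 -> P x2 -> P y1 -> P y2 ->
  maxn (h x1) (h x2) = maxn (h y1) (h y2) ->
  minn (h x1) (h x2) = minn (h y1) (h y2) ->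
  f x1 + f x2 = f y1 + f y2.
Proof.
move=> hf P1 P2 P3 P4.
have [le_x|/ltnW le_x] := leqP (h x1) (h x2);
  rewrite ?(maxn_idPr le_x) ?(minn_idPl le_x) ?(maxn_idPl le_x) ?(minn_idPr le_x);
have [le_y|/ltnW le_y] := leqP (h y1) (h y2);
  rewrite ?(maxn_idPr le_y) ?(minn_idPl le_y) ?(maxn_idPl le_y) ?(minn_idPr le_y);
move=> e_max e_min; first [ by rewrite (hf x1 y1) // (hf x2 y2)
                           | by rewrite addrC (hf x1 y2) // (hf x2 y1) ].
Qed.

Definition nondegenerate (q1 q2 : int) : bool :=
  [&& q1 != 0, q2 != 0, q1 + q2 != 0 & q1 - q2 != 0].

Definition profile p (q1 q2 : int) : nat * nat * nat * nat :=
  (maxn (vz p q1) (vz p q2), minn (vz p q1) (vz p q2),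
   maxn (vz p (q1 + q2)) (vz p (q1 - q2)), minn (vz p (q1 + q2)) (vz p (q1 - q2))).

(* A key in [0, m)^2 determining the profile: (a, b) with a <= b when
   v(q1) = v(q2) = a, and (max, min) with max > min otherwise. *)
Definition key p (q1 q2 : int) : nat * nat :=
  if vz p q1 == vz p q2 then (vz p q1, maxn (vz p (q1 + q2)) (vz p (q1 - q2)))
  else (maxn (vz p q1) (vz p q2), minn (vz p q1) (vz p q2)).

Definition profile_of_key (k : nat * nat) : nat * nat * nat * nat :=
  if (k.2 < k.1)%N then (k.1, k.2, k.2, k.2) else (k.1, k.1, k.2, k.1).

(* The key determines the profile: if v(q1) != v(q2) both v(q1 +- q2) equal
   the smaller one, and if v(q1) = v(q2) = a then min v(q1 +- q2) = a. *)
Lemma profileE p q1 q2 : prime p -> odd p -> nondegenerate q1 q2 ->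
  profile p q1 q2 = profile_of_key (key p q1 q2).
Proof.
move=> p_pr p_odd /and4P [n1 n2 ns nd]; rewrite /profile /key.
have [e|ne] := eqVneq (vz p q1) (vz p q2).
  have min_pm := vz_add_eq _ _ _ p_pr p_odd n1 ns nd e.
  have le_max : (vz p q1 <= maxn (vz p (q1 + q2)) (vz p (q1 - q2)))%N.
    by rewrite -min_pm leq_max geq_minl.
  by rewrite /profile_of_key /= ltnNge le_max /= -e maxnn minnn min_pm.
have n2N : - q2 != 0 by rewrite oppr_eq0.
have [lt12|lt21|] := ltngtP (vz p q1) (vz p q2); last by move/eqP; rewrite (negbTE ne).
- have vs := vz_add_lt _ _ _ p_pr n1 ns lt12.
  have vd : vz p (q1 - q2) = vz p q1 by apply: vz_add_lt; rewrite ?vzN.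
  by rewrite vs vd maxnn minnn /profile_of_key /= lt12.
- have vs : vz p (q1 + q2) = vz p q2.
    by rewrite addrC; apply: vz_add_lt; rewrite // addrC.
  have vd : vz p (q1 - q2) = vz p q2.
    by rewrite addrC -(vzN p q2); apply: vz_add_lt; rewrite ?vzN // addrC.
  by rewrite vs vd maxnn minnn /profile_of_key /= lt21.
Qed.

Lemma invariant_sum_eq g p m (S : pred nat) q1 q2 q1' q2' :
  prime p -> odd p -> (p ^ m).-primitive_root g -> ~~ S 0%N ->
  (forall u l, coprime u p -> S (u * l %% p ^ m)%N = S l) ->
  nondegenerate q1 q2 -> nondegenerate q1' q2' -> key p q1 q2 = key p q1' q2' ->
  \sum_(1 <= l < p ^ m | S l) factor_poly g q1 q2 l =
  \sum_(1 <= l < p ^ m | S l) factor_poly g q1' q2' l.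
Proof.
move=> p_pr p_odd g_prim S0 S_inv nd nd' e_key.
have g0 : g != 0 by rewrite (prim_root_eq0 g_prim) -lt0n (prim_order_gt0 g_prim).
have := profileE _ _ _ p_pr p_odd nd; rewrite e_key -(profileE _ _ _ p_pr p_odd nd').
case=> e_max e_min e_max_pm e_min_pm.
have cos_eq x y : x != 0 -> y != 0 -> vz p x = vz p y ->
    cos_sum g (p ^ m) S x = cos_sum g (p ^ m) S y.
  exact: cos_sum_vz.
move: nd nd' => /and4P [? ? ? ?] /and4P [? ? ? ?].
by apply: factor_sum_eq => //; apply: (sum_pair_eq _ _ (fun x : int => x != 0) _ (vz p)).
Qed.

Lemma tau_eq_of_key g p m q1 q2 q1' q2' :
  prime p -> odd p -> (0 < m)%N -> (p ^ m).-primitive_root g ->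
  nondegenerate q1 q2 -> nondegenerate q1' q2' -> key p q1 q2 = key p q1' q2' ->
  tau p m g q1 q2 = tau p m g q1' q2'.
Proof.
move=> p_pr p_odd m_gt0 g_prim nd nd' e_key.
rewrite /tau /psi_poly; congr (_ :: _).
  apply: invariant_sum_eq => //.
    by rewrite /coprime gcd0n -(expn0 p) eqn_exp2l ?prime_gt1 // -lt0n.
  by move=> u l cup; apply: coprime_unit_mul; rewrite coprimeXr.
apply/eq_in_map => j; rewrite mem_iota add1n prednK // => /andP [_ jm].
apply: invariant_sum_eq => //; first by rewrite !dvdn0.
by move=> u l cup; rewrite !dvdn_pexp_unit_mul // ltnW.
Qed.

Lemma key_lt p m q1 q2 : prime p ->
  ~~ ((p ^ m)%N%:Z %| q1)%Z -> ~~ ((p ^ m)%N%:Z %| q2)%Z ->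
  ~~ ((p ^ m)%N%:Z %| q1 + q2)%Z -> ~~ ((p ^ m)%N%:Z %| q1 - q2)%Z ->
  ((key p q1 q2).1 < m)%N && ((key p q1 q2).2 < m)%N.
Proof.
move=> p_pr; rewrite !ndvdz_exp // => /andP [_ l1] /andP [_ l2] /andP [_ ls] /andP [_ ld].
by rewrite /key; case: ifP => _ /=; rewrite ?gtn_max ?gtn_min ?l1 ?l2 ?ls ?ld.
Qed.

Lemma image_size_le (T : Type) (K U : eqType) (P : T -> Prop) (f : T -> U)
    (h : T -> K) (ks : seq K) :
  (forall x, P x -> h x \in ks) ->
  (forall x y, P x -> P y -> h x = h y -> f x = f y) ->
  exists s : seq U, (size s <= size ks)%N /\ forall x, P x -> f x \in s.
Proof.
elim: ks P => [|k ks IH] P h_in f_eq; first by exists [::]; split=> // x /h_in.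
have [[x0 [P_x0 h_x0]]|no_k] := classic (exists x, P x /\ h x = k).
  have h_in' x : P x /\ h x != k -> h x \in ks.
    by case=> /h_in; rewrite in_cons => /orP [/eqP ->|]; rewrite ?eqxx.
  have f_eq' x y : P x /\ h x != k -> P y /\ h y != k -> h x = h y -> f x = f y.
    by move=> [Px _] [Py _]; apply: f_eq.
  have [s [size_s s_in]] := IH _ h_in' f_eq'.
  exists (f x0 :: s); split=> // x Px; rewrite in_cons.
  have [e|ne] := eqVneq (h x) k; last by rewrite s_in ?orbT.
  by rewrite (f_eq x x0) ?eqxx // e.
have h_in' x : P x -> h x \in ks.
  move=> Px; move: (h_in x Px); rewrite in_cons => /orP [/eqP e|//].
  by case: no_k; exists x.
have [s [size_s s_in]] := IH _ h_in' f_eq.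
by exists s; split=> //; exact: leqW.
Qed.

Theorem proposition3p1p2 (p m : nat) (g : algC) :
  prime p -> odd p -> (2 <= m)%N -> is_exp_2pii_over (p ^ m) g ->
  exists s : seq (seq {poly algC}),
    (size s <= m ^ 2)%N /\
    forall q1 q2 : int,
      ~~ ((p ^ m)%N%:Z %| q1)%Z -> ~~ ((p ^ m)%N%:Z %| q2)%Z ->
      ~~ ((p ^ m)%N%:Z %| q1 + q2)%Z -> ~~ ((p ^ m)%N%:Z %| q1 - q2)%Z ->
      tau p m g q1 q2 \in s.
Proof.
move=> p_pr p_odd m_ge2 [g_prim _ _]; have m_gt0 : (0 < m)%N by exact: ltnW.
pose admissible (x : int * int) := [/\ ~~ ((p ^ m)%N%:Z %| x.1)%Z,
  ~~ ((p ^ m)%N%:Z %| x.2)%Z, ~~ ((p ^ m)%N%:Z %| x.1 + x.2)%Z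
  & ~~ ((p ^ m)%N%:Z %| x.1 - x.2)%Z].
have nondeg x : admissible x -> nondegenerate x.1 x.2.
  case; rewrite /nondegenerate !ndvdz_exp //.
  by move=> /andP [-> _] /andP [-> _] /andP [-> _] /andP [-> _].
pose keys := [seq (i, j) | i <- iota 0 m, j <- iota 0 m].
have key_in x : admissible x -> key p x.1 x.2 \in keys.
  case: x => q1 q2 [/= n1 n2 ns nd].
  case: (key p q1 q2) (key_lt _ _ _ _ p_pr n1 n2 ns nd) => i j /andP [i_lt j_lt].
  by apply: allpairs_f; rewrite mem_iota.
have tau_eq x y : admissible x -> admissible y ->
    key p x.1 x.2 = key p y.1 y.2 -> tau p m g x.1 x.2 = tau p m g y.1 y.2.
  by move=> /nondeg nd_x /nondeg nd_y; apply: tau_eq_of_key.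
have [s [size_s s_in]] := image_size_le _ _ _ admissible _ _ keys key_in tau_eq.
exists s; split; first by rewrite size_allpairs size_iota mulnn in size_s.
by move=> q1 q2 n1 n2 ns nd; apply: (s_in (q1, q2)).
Qed.
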